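(* Suppose the observation probability matrix $P=(p_{ij})$ is correctly specified and the weights are properly assigned, and let $R$ be any symmetric scoring function with a continuous distribution. For a test location $(i_\ast,j_\ast)$ with $(i_\ast,j_\ast)\mid\Omega_{\mathrm{obs}}\sim\mathrm{Unif}(\Omega^c_{\mathrm{obs}})$, the full conformal interval $\widehat{C}$ satisfies $$\mathbb{P}\{X_{i_\ast j_\ast}\in\widehat{C}(i_\ast,j_\ast)\}=\mathbb{P}\{X_{i_\ast j_\ast}\in\widehat{X}_{i_\ast j_\ast}\pm q^\ast_{i_\ast j_\ast}\widehat{\sigma}_{i_\ast j_\ast}\}=\mathbb{P}\{R_{i_\ast j_\ast}\le q^\ast_{i_\ast j_\ast}\}\le1-\alpha+\omega_{\max},$$ where $q^\ast_{i_\ast j_\ast}=\mathrm{Quantile}_{1-\alpha}\big(\sum_{k=1}^{n_{\mathrm{cal}}+1}\omega_{i_kj_k}\delta_{R_{i_kj_k}}\big)$ and $\omega_{\max}=\max_k\omega_{i_kj_k}$.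
   Context: $X\in\mathbb{R}^{d_1\times d_2}$ is fixed. Independent $Z_{ij}\sim\mathrm{Bern}(p_{ij})$ with nonzero $p_{ij}$ define the observed set $\Omega_{\mathrm{obs}}=\{Z_{ij}=1\}$. The calibration points $(i_1,j_1),\ldots,(i_{n_{\mathrm{cal}}},j_{n_{\mathrm{cal}}})$ are the observed indices retained for calibration (uncorrupted observed entries), and $(i_{n_{\mathrm{cal}}+1},j_{n_{\mathrm{cal}}+1})=(i_\ast,j_\ast)$ is the test point. Properly assigned weights: $\omega_{i_kj_k}=h_{i_kj_k}/\sum_{k'=1}^{n_{\mathrm{cal}}+1}h_{i_{k'}j_{k'}}$, $h_{ij}=(1-p_{ij})/p_{ij}$. $\widehat{X}$ and $\widehat{\sigma}_{ij}>0$ are estimates and the score is $R_{ij}=|X_{ij}-\widehat{X}_{ij}|/\widehat{\sigma}_{ij}$, computed symmetrically in the $n_{\mathrm{cal}}+1$ points. $\mathrm{Quantile}_{1-\alpha}(\mu)=\inf\{t:\mu((-\infty,t])\ge1-\alpha\}$ for a discrete probability measure $\mu$; $\delta_t$ is the point mass at $t$; $\widehat{C}(i_\ast,j_\ast)=[\widehat{X}_{i_\ast j_\ast}-q^\ast_{i_\ast j_\ast}\widehat{\sigma}_{i_\ast j_\ast},\widehat{X}_{i_\ast j_\ast}+q^\ast_{i_\ast j_\ast}\widehat{\sigma}_{i_\ast j_\ast}]$. *)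

From HB Require Import structures.
From mathcomp Require Import all_boot all_order all_algebra.
From mathcomp Require Import all_classical all_reals.
Set Implicit Arguments. Unset Strict Implicit. Unset Printing Implicit Defensive.
Import Order.TTheory GRing.Theory Num.Theory.
Local Open Scope ring_scope.
Local Open Scope classical_set_scope.

Definition idx (d1 d2 : nat) : finType := ('I_d1 * 'I_d2)%type.

(* Probability that Omega_obs = Om, under independent Z_ij ~ Bern(p_ij). *)
Definition probOmega {R : realType} {T : finType} (p : T -> R) (Om : {set T}) : R :=
  \prod_(x : T) (if x \in Om then p x else 1 - p x).

(* Joint mass of (Omega_obs, test point): Omega_obs from Bernoulli sampling,
   test point | Omega_obs ~ Unif(Omega_obs^c). *)
Definition jointMass {R : realType} {T : finType} (p : T -> R)
  (Om : {set T}) (t : T) : R :=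
  probOmega p Om * (if t \in Om then 0 else (#|~: Om|%:R)^-1).

(* Probability of an event, conditional on Omega_obs^c being nonempty
   (which is needed for the test point to exist). *)
Definition Prob {R : realType} {T : finType} (p : T -> R)
  (E : {set T} -> T -> bool) : R :=
  (\sum_(Om : {set T}) \sum_(t : T) jointMass p Om t * (E Om t)%:R) /
  (\sum_(Om : {set T}) \sum_(t : T) jointMass p Om t).

Definition Expect {R : realType} {T : finType} (p : T -> R)
  (f : {set T} -> T -> R) : R :=
  (\sum_(Om : {set T}) \sum_(t : T) jointMass p Om t * f Om t) /
  (\sum_(Om : {set T}) \sum_(t : T) jointMass p Om t).

Definition hw {R : realType} {T : finType} (p : T -> R) (x : T) : R :=
  (1 - p x) / p x.

(* Properly assigned weight of point a among the n_cal+1 points S. *)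
Definition weight {R : realType} {T : finType} (p : T -> R) (S : {set T}) (a : T) : R :=
  hw p a / \sum_(b in S) hw p b.

Definition wmax {R : realType} {T : finType} (p : T -> R) (S : {set T}) : R :=
  \big[Num.max/0]_(a in S) weight p S a.

Definition wcdf {R : realType} {T : finType} (p : T -> R) (S : {set T})
  (Rs : T -> R) (t : R) : R :=
  \sum_(a in S | Rs a <= t) weight p S a.

Definition wquantile {R : realType} {T : finType} (p : T -> R) (S : {set T})
  (Rs : T -> R) (alpha : R) : R :=
  inf [set t : R | 1 - alpha <= wcdf p S Rs t].

(* Score R_ij = |X_ij - Xhat_ij| / sigmahat_ij, where the estimates are
   computed symmetrically from the n_cal+1 points S (they depend on S only
   as a set; X is fixed so the data on S is determined by S). *)
Definition score {R : realType} {T : finType} (X : T -> R)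
  (Xhat sighat : {set T} -> T -> R) (S : {set T}) (x : T) : R :=
  `|X x - Xhat S x| / sighat S x.

Definition qstar {R : realType} {T : finType} (p : T -> R) (X : T -> R)
  (Xhat sighat : {set T} -> T -> R) (alpha : R) (Om : {set T}) (t : T) : R :=
  wquantile p (t |: Om) (score X Xhat sighat (t |: Om)) alpha.

Definition covered {R : realType} {T : finType} (p : T -> R) (X : T -> R)
  (Xhat sighat : {set T} -> T -> R) (alpha : R) (Om : {set T}) (t : T) : bool :=
  let S := t |: Om in
  let q := qstar p X Xhat sighat alpha Om t in
  (Xhat S t - q * sighat S t <= X t) && (X t <= Xhat S t + q * sighat S t).

From HB Require Import structures.
From mathcomp Require Import all_boot all_order all_algebra.
From mathcomp Require Import all_classical all_reals.
From mathcomp Require Import ring lra.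
Import Order.TTheory GRing.Theory Num.Theory.
Local Open Scope ring_scope.

(* Given the set S of the n_cal + 1 points (calibration points and test point),
   the test point is t in S with probability proportional to
   P(Omega_obs = S :\ t) = P(Omega_obs = S) * h_t, times the uniform factor
   1 / (#|~: S| + 1), which does not depend on t.  So the test point is drawn
   from S with the properly assigned weights, and the coverage probability is
   an average over S of the weighted cdf of the scores evaluated at its own
   (1 - alpha)-quantile.  Below the quantile that cdf stays under 1 - alpha,
   and without ties the quantile itself carries a single atom, of weight at
   most omega_max. *)
Section WeightedQuantile.
Variables (R : realType) (T : finType) (S : {set T}) (w Rs : T -> R) (beta : R).
Hypothesis beta_gt0 : 0 < beta.

Let cdf (t : R) := \sum_(a in S | Rs a <= t) w a.
Let q := inf [set t | beta <= cdf t]%classic.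

Lemma has_lbound_quantile_set : has_lbound [set t | beta <= cdf t]%classic.
Proof.
exists (\big[Num.min/0]_(a in S) Rs a) => t /= beta_le; rewrite leNgt; apply/negP => t_lt.
move: beta_le; rewrite /cdf big1 ?leNgt ?beta_gt0 // => a /andP[aS le_at]; move: t_lt.
by rewrite ltNge (le_trans (bigmin_le_cond _ _ aS) le_at).
Qed.

Lemma mass_below_quantile_lt : \sum_(a in S | Rs a < q) w a < beta.
Proof.
(* The largest score below q (or q - 1 if there is none) is a point strictly
   left of q at which the cdf already equals the mass below q. *)
set t0 := \big[Num.max/(q - 1)]_(a in S | Rs a < q) Rs a.
have t0_lt_q : t0 < q by apply/bigmax_ltP; split=> [|a /andP[]//]; lra.
have <- : cdf t0 = \sum_(a in S | Rs a < q) w a.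
  apply: eq_bigl => a; case aS: (a \in S) => //=.
  apply/idP/idP => [/le_lt_trans->//|aq].
  by rewrite (le_bigmax_cond _ _ (P := fun a => (a \in S) && (Rs a < q))) ?aS.
rewrite ltNge; apply/negP => /(ge_inf has_lbound_quantile_set) q_le_t0.
by move: t0_lt_q; rewrite ltNge q_le_t0.
Qed.

Hypothesis Rs_inj : {in S &, injective Rs}.

Lemma mass_at_quantile_le :
  \sum_(a in S | Rs a == q) w a <= \big[Num.max/0]_(a in S) w a.
Proof.
case: (pickP (fun a => (a \in S) && (Rs a == q))) => [a0 /andP[a0S /eqP a0q]|none].
  rewrite (big_pred1 a0) ?le_bigmax_cond // => a /=.
  apply/andP/eqP => [[aS /eqP aq]|->]; last by rewrite a0S a0q.
  by apply: Rs_inj; rewrite ?aq.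
by rewrite big_pred0 // bigmax_ge_id.
Qed.

Lemma mass_upto_quantile_le : cdf q <= beta + \big[Num.max/0]_(a in S) w a.
Proof.
have -> : cdf q = \sum_(a in S | Rs a < q) w a + \sum_(a in S | Rs a == q) w a.
  rewrite /cdf (bigID (fun a => Rs a < q)) /=.
  by congr (_ + _); apply: eq_bigl => a; case: (a \in S);
    rewrite //= ?andbT ?le_eqVlt; case: ltgtP.
by rewrite lerD ?mass_at_quantile_le // ltW ?mass_below_quantile_lt.
Qed.

End WeightedQuantile.

Lemma wcdf_quantile_le {R : realType} {T : finType} (p : T -> R) (S : {set T})
    (Rs : T -> R) (alpha : R) :
  alpha < 1 -> {in S &, injective Rs} ->
  wcdf p S Rs (wquantile p S Rs alpha) <= 1 - alpha + wmax p S.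
Proof. by move=> alpha_lt1; apply: mass_upto_quantile_le; rewrite subr_gt0. Qed.

Lemma card_setCD1 (T : finType) (S : {set T}) (t : T) :
  t \in S -> #|~: (S :\ t)| = #|~: S|.+1.
Proof. by move=> tS; rewrite finset.setCD finset.setUC cardsU1 finset.in_setC tS. Qed.

Lemma sum_jointMass_setU1 (R : realType) (T : finType) (p : T -> R)
    (f : {set T} -> T -> R) :
  \sum_(Om : {set T}) \sum_(t : T) jointMass p Om t * f (t |: Om) t
  = \sum_(S : {set T}) \sum_(t in S) jointMass p (S :\ t) t * f S t.
Proof.
rewrite exchange_big [RHS](exchange_big_dep xpredT) //=; apply: eq_bigr => t _.
rewrite (bigID (fun Om : {set T} => t \in Om)) /= big1 ?add0r; last first.
  by move=> Om tOm; rewrite /jointMass tOm mulr0 mul0r.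
rewrite (reindex_onto (fun S : {set T} => S :\ t) (fun Om => t |: Om)) /=;
  last by move=> Om tOm; rewrite finset.setU1K.
apply: eq_big => [S|S /andP[_ /eqP ->] //]; rewrite setD11 /=.
by apply/eqP/idP => [<-|tS]; [rewrite setU11 | exact: finset.setD1K].
Qed.

Section Sampling.
Variables (R : realType) (T : finType) (p : T -> R).
Hypothesis p_range : forall x, 0 < p x <= 1.

Lemma probOmega_ge0 (Om : {set T}) : 0 <= probOmega p Om.
Proof. by apply: prodr_ge0 => x _; case: (x \in Om); have := p_range x; lra. Qed.

Lemma jointMass_ge0 (Om : {set T}) t : 0 <= jointMass p Om t.
Proof. by rewrite mulr_ge0 ?probOmega_ge0 //; case: (t \in Om); rewrite ?invr_ge0. Qed.

Lemma hw_ge0 x : 0 <= hw p x.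
Proof. by have /andP[p_gt0 p_le1] := p_range x; rewrite divr_ge0 ?subr_ge0 ?(ltW p_gt0). Qed.

Lemma probOmega_setD1 (S : {set T}) t :
  t \in S -> probOmega p (S :\ t) = probOmega p S * hw p t.
Proof.
move=> tS; rewrite /probOmega (bigD1 t) //= [in RHS](bigD1 t) //= setD11 tS.
rewrite (eq_bigr (fun x => if x \in S then p x else 1 - p x)); last first.
  by move=> x xt; rewrite in_setD1 xt.
by have /andP[p_gt0 _] := p_range t; rewrite /hw; field; rewrite gt_eqF.
Qed.

Lemma jointMass_setD1 (S : {set T}) t : t \in S ->
  jointMass p (S :\ t) t = probOmega p S / (#|~: S|.+1)%:R * hw p t.
Proof.
by move=> tS; rewrite /jointMass setD11 probOmega_setD1 // card_setCD1 //; ring.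
Qed.

Lemma sum_hw_weight (S : {set T}) (g : T -> R) :
  \sum_(t in S) hw p t * g t
  = (\sum_(t in S) hw p t) * \sum_(t in S) weight p S t * g t.
Proof.
have [H0|H_neq0] := eqVneq (\sum_(t in S) hw p t) 0.
  rewrite H0 mul0r big1 // => t tS.
  by rewrite (psumr_eq0P (fun x _ => hw_ge0 x) H0 tS) mul0r.
rewrite mulr_sumr; apply: eq_bigr => t _; rewrite /weight; field.
by rewrite H_neq0.
Qed.

Lemma sum_weight (S : {set T}) :
  \sum_(t in S) hw p t != 0 -> \sum_(t in S) weight p S t = 1.
Proof. by move=> H_neq0; rewrite /weight -mulr_suml divff. Qed.

Lemma sum_jointMass_weighted (f : {set T} -> T -> R) :
  \sum_(Om : {set T}) \sum_(t : T) jointMass p Om t * f (t |: Om) t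
  = \sum_(S : {set T}) probOmega p S * (\sum_(t in S) hw p t) / (#|~: S|.+1)%:R
                        * \sum_(t in S) weight p S t * f S t.
Proof.
rewrite sum_jointMass_setU1; apply: eq_bigr => S _.
rewrite (eq_bigr (fun t => probOmega p S / (#|~: S|.+1)%:R * (hw p t * f S t))).
  by rewrite -mulr_sumr sum_hw_weight; ring.
by move=> t tS; rewrite jointMass_setD1 // mulrA.
Qed.

Lemma exists_probOmega_setD1_gt0 (S : {set T}) :
  0 < probOmega p S * \sum_(t in S) hw p t ->
  exists2 t, t \in S & 0 < probOmega p (S :\ t).
Proof.
rewrite mulr_sumr; apply: contraPP => /forall2NP none; apply/negP; rewrite -leNgt.
apply: sumr_le0 => t tS; rewrite -probOmega_setD1 // leNgt.
by case: (none t) => // /negP.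
Qed.

Lemma sum_jointMass_gt0 :
  (exists x, p x < 1) -> 0 < \sum_(Om : {set T}) \sum_(t : T) jointMass p Om t.
Proof.
case=> x px_lt1; set Om0 := ~: [set x].
have Om0_gt0 : 0 < jointMass p Om0 x.
  rewrite /jointMass finset.in_setC finset.in_set1 eqxx /= finset.setCK cards1.
  rewrite invr1 mulr1; apply: prodr_gt0 => y _.
  have /andP[p_gt0 _] := p_range y.
  by rewrite finset.in_setC finset.in_set1; case: eqVneq => [->|] /=; rewrite ?subr_gt0.
rewrite (bigD1 Om0) //= (bigD1 x) //= -addrA ltr_pwDl // addr_ge0 //.
  by apply: sumr_ge0 => t _; exact: jointMass_ge0.
by apply: sumr_ge0 => Om _; apply: sumr_ge0 => t _; exact: jointMass_ge0.
Qed.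

Lemma Prob_le_add_Expect (E : {set T} -> T -> bool) (g : {set T} -> T -> R) c :
  (exists x, p x < 1) ->
  \sum_(Om : {set T}) \sum_(t : T) jointMass p Om t * ((E Om t)%:R - c - g Om t) <= 0 ->
  Prob p E <= c + Expect p g.
Proof.
move=> /sum_jointMass_gt0 D_gt0 excess_le0; rewrite /Prob /Expect.
rewrite ler_pdivrMr // mulrDl divfK ?gt_eqF // -subr_le0 opprD addrA.
apply: le_trans excess_le0; rewrite mulr_sumr -!sumrB; apply: ler_sum => Om _.
by rewrite mulr_sumr -!sumrB; apply: ler_sum => t _; rewrite !mulrBr [c * _]mulrC.
Qed.

End Sampling.

Lemma weighted_coverage_excess_le0 (R : realType) (T : finType) (p : T -> R)
    (S : {set T}) (Rs : T -> R) (alpha : R) :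
  alpha < 1 -> {in S &, injective Rs} -> \sum_(t in S) hw p t != 0 ->
  \sum_(t in S) weight p S t
      * (((Rs t <= wquantile p S Rs alpha)%R)%:R - (1 - alpha) - wmax p S) <= 0.
Proof.
move=> alpha_lt1 Rs_inj H_neq0.
under eq_bigr do rewrite -addrA -opprD mulrBr.
rewrite sumrB -mulr_suml sum_weight // mul1r subr_le0.
rewrite (le_trans _ (wcdf_quantile_le p S Rs alpha alpha_lt1 Rs_inj)) // /wcdf big_mkcondr.
by apply: ler_sum => t _; rewrite mulr_natr mulrb.
Qed.

Section Coverage.
Variables (R : realType) (T : finType) (p : T -> R) (X : T -> R)
  (Xhat sighat : {set T} -> T -> R) (alpha : R).
Hypothesis p_range : forall x, 0 < p x <= 1.
Hypothesis alpha_lt1 : alpha < 1.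
Hypothesis scores_inj : forall (Om : {set T}) (t : T),
  0 < probOmega p Om -> t \notin Om ->
  {in t |: Om &, injective (score X Xhat sighat (t |: Om))}.

Let coverage_excess (S : {set T}) (t : T) : R :=
  ((score X Xhat sighat S t <= wquantile p S (score X Xhat sighat S) alpha)%R)%:R
  - (1 - alpha) - wmax p S.

Lemma coverage_excess_term_le0 (S : {set T}) :
  probOmega p S * (\sum_(t in S) hw p t) / (#|~: S|.+1)%:R
    * \sum_(t in S) weight p S t * coverage_excess S t <= 0.
Proof.
set mass := probOmega p S * _.
have mass_ge0 : 0 <= mass.
  by rewrite mulr_ge0 ?probOmega_ge0 ?sumr_ge0 // => t _; exact: hw_ge0.
have [->|mass_neq0] := eqVneq mass 0; first by rewrite !mul0r.
have [t tS Om_gt0] : exists2 t, t \in S & 0 < probOmega p (S :\ t).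
  by apply: exists_probOmega_setD1_gt0; rewrite // lt0r mass_neq0.
have := scores_inj (S :\ t) t Om_gt0 (negbT (setD11 t S)); rewrite finset.setD1K // => Rs_inj.
rewrite mulr_ge0_le0 ?divr_ge0 // weighted_coverage_excess_le0 //.
by move: mass_neq0; rewrite mulf_eq0 negb_or => /andP[].
Qed.

Lemma sum_jointMass_coverage_excess_le0 :
  \sum_(Om : {set T}) \sum_(t : T) jointMass p Om t * coverage_excess (t |: Om) t <= 0.
Proof. by rewrite sum_jointMass_weighted //; apply: sumr_le0 => S _; exact: coverage_excess_term_le0. Qed.

End Coverage.

Theorem lemma4 (R : realType) (d1 d2 : nat)
  (p : idx d1 d2 -> R) (X : idx d1 d2 -> R)
  (Xhat sighat : {set idx d1 d2} -> idx d1 d2 -> R) (alpha : R)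
  (hp : forall x, 0 < p x <= 1)
  (hp1 : exists x, p x < 1)
  (halpha : 0 < alpha < 1)
  (hsig : forall S x, 0 < sighat S x)
  (hnotie : forall (Om : {set idx d1 d2}) (t : idx d1 d2),
     0 < probOmega p Om -> t \notin Om ->
     {in t |: Om &, injective (score X Xhat sighat (t |: Om))}) :
  Prob p (covered p X Xhat sighat alpha)
    = Prob p (fun Om t => score X Xhat sighat (t |: Om) t
                            <= qstar p X Xhat sighat alpha Om t)
  /\ Prob p (fun Om t => score X Xhat sighat (t |: Om) t
                            <= qstar p X Xhat sighat alpha Om t)
     <= 1 - alpha + Expect p (fun Om t => wmax p (t |: Om)).
Proof.
have /andP[_ alpha_lt1] := halpha.
split.
  congr (Prob p _); apply/funext => Om; apply/funext => t.
  by rewrite /covered /score ler_pdivrMr // ler_distl.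
apply: Prob_le_add_Expect => //.
exact: sum_jointMass_coverage_excess_le0.
Qed.
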